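(* Let $n\ge2$ and $A\in s(n)$. If there exists $i\in\{1,\dots,n\}$ such that all entries of the $i$-th column $Ae_i$ are strictly positive, then $A$ is divisible in $s(n)$.
   Context: $s(n)$ denotes the set of $n\times n$ column-stochastic matrices (non-negative real entries, each column summing to $1$), a monoid under matrix multiplication whose group of units is the set of permutation matrices. $A\in s(n)$ is indivisible if for every decomposition $A=BC$ with $B,C\in s(n)$ exactly one of $B,C$ is a permutation matrix, and divisible otherwise. $e_i$ is the $i$-th standard basis vector. *)

From mathcomp Require Import all_boot all_order all_algebra.
From mathcomp Require Import reals.
Set Implicit Arguments. Unset Strict Implicit. Unset Printing Implicit Defensive.
Import Order.TTheory GRing.Theory Num.Theory.
Local Open Scope ring_scope.

(* Column-stochastic n x n real matrices: the monoid s(n). *)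
Definition col_stochastic (R : realType) (n : nat) (A : 'M[R]_n) : Prop :=
  (forall i j, 0 <= A i j) /\ (forall j, \sum_(i < n) A i j = 1).

Definition indivisible (R : realType) (n : nat) (A : 'M[R]_n) : Prop :=
  forall B C : 'M[R]_n, col_stochastic B -> col_stochastic C ->
    A = B *m C -> (is_perm_mx B (+) is_perm_mx C)%B.

Definition divisible (R : realType) (n : nat) (A : 'M[R]_n) : Prop :=
  ~ indivisible A.

From mathcomp Require Import all_boot all_order all_algebra.
From mathcomp Require Import reals.
From mathcomp Require Import perm.
Import Order.TTheory GRing.Theory Num.Theory.
Set Implicit Arguments. Unset Strict Implicit. Unset Printing Implicit Defensive.
Local Open Scope ring_scope.

(* Fix j <> i and 0 < t < 1, and let C be the identity matrix with column i
   replaced by (1 - t) e_i + t e_j, so that B C is B with column i replaced by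
   (1 - t) B e_i + t B e_j.  Since A e_i > 0, for t small enough the vector
   (A e_i - t A e_j) / (1 - t) is still a probability vector; putting it in
   column i of A gives B in s(n) with A = B C.  Neither factor is a
   permutation matrix: column i of B has n >= 2 nonzero entries, and C has
   the entry t strictly between 0 and 1. *)

Lemma ord_exists_neq n (i : 'I_n) : (1 < n)%N -> exists j : 'I_n, j != i.
Proof.
rewrite -[n in (_ < n)%N]card_ord => /card_gt1P[x [y [_ _ xy]]].
by case: (eqVneq x i) => [<-|]; [exists y; rewrite eq_sym | exists x].
Qed.

Section ColumnMixing.
Variables (F : fieldType) (n : nat).
Implicit Types (A : 'M[F]_n) (i j k l : 'I_n) (t : F).

Lemma sum_mul_delta (f : 'I_n -> F) i : \sum_k f k * (k == i)%:R = f i.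
Proof.
rewrite (bigD1 i) //= big1 ?eqxx ?mulr1 ?addr0 // => k /negbTE ->.
by rewrite mulr0.
Qed.

Lemma sum_delta i : \sum_k (k == i)%:R = 1 :> F.
Proof.
rewrite -[RHS](sum_mul_delta (fun=> 1) i).
by apply: eq_bigr => k _; rewrite mul1r.
Qed.

Definition col_mix i j t : 'M[F]_n :=
  \matrix_(k, l) if l == i then (1 - t) * (k == i)%:R + t * (k == j)%:R
                 else (k == l)%:R.

Definition col_unmix A i j t : 'M[F]_n :=
  \matrix_(k, l) if l == i then (A k i - t * A k j) / (1 - t) else A k l.

Lemma mulmx_col_mix A i j t :
  A *m col_mix i j t =
  \matrix_(k, l) if l == i then (1 - t) * A k i + t * A k j else A k l.
Proof.
apply/matrixP => k l; rewrite !mxE.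
under eq_bigr do rewrite mxE fun_if.
case: eqP => _; last by rewrite sum_mul_delta.
under eq_bigr do rewrite mulrDr !mulrA.
by rewrite big_split /= !sum_mul_delta ![A k _ * _]mulrC.
Qed.

Lemma col_unmixK A i j t :
  i != j -> t != 1 -> col_unmix A i j t *m col_mix i j t = A.
Proof.
move=> ij t1; rewrite mulmx_col_mix; apply/matrixP => k l; rewrite !mxE.
rewrite eqxx [j == i]eq_sym (negbTE ij); case: eqP => [-> | //].
by rewrite mulrC divfK ?subrK // subr_eq0 eq_sym.
Qed.

End ColumnMixing.

Section PermutationMatrices.
Variables (R : numDomainType) (n : nat).
Implicit Types (B : 'M[R]_n) (k l : 'I_n).

Lemma perm_mx_entry (s : 'S_n) k l :
  (perm_mx s : 'M[R]_n) k l = (s k == l)%:R.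
Proof. by rewrite !mxE. Qed.

Lemma not_perm_mx_entry_in01 B k l : 0 < B k l < 1 -> ~~ is_perm_mx B.
Proof.
move=> /andP[B_gt0 B_lt1]; apply/is_perm_mxP => -[s defB].
by move: B_gt0 B_lt1; rewrite defB perm_mx_entry; case: eqP; rewrite ltxx.
Qed.

Lemma not_perm_mx_col_gt0 B l :
  (1 < n)%N -> (forall k, 0 < B k l) -> ~~ is_perm_mx B.
Proof.
rewrite -[n in (_ < n)%N]card_ord => /card_gt1P[k1 [k2 [_ _ k12]]] B_gt0.
apply/is_perm_mxP => -[s defB].
have s_l k : s k = l.
  apply/eqP; move: (B_gt0 k).
  by rewrite defB perm_mx_entry; case: eqP; rewrite ?ltxx.
by move: k12; rewrite -(inj_eq (@perm_inj _ s)) !s_l eqxx.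
Qed.

End PermutationMatrices.

Lemma small_weight_exists (R : realFieldType) n (a b : 'I_n -> R) :
  (forall k, 0 < a k) -> (forall k, b k <= 1) ->
  exists2 t, 0 < t < 1 & forall k, t * b k < a k.
Proof.
move=> a_gt0 b_le1; pose m := \big[Order.min/1]_k a k.
have m_gt0 : 0 < m by apply: lt_bigmin => //; apply: ltr01.
have t_lt_m : m / 2 < m by rewrite ltr_pdivrMr // ltr_pMr // ltr1n.
exists (m / 2); first by rewrite divr_gt0 // (lt_le_trans t_lt_m) ?bigmin_le_id.
move=> k; apply: le_lt_trans (lt_le_trans t_lt_m (bigmin_le _ k _)).
by rewrite ler_piMr // divr_ge0 // ltW.
Qed.

Section StochasticFactors.
Variables (R : realType) (n : nat).
Implicit Types (A : 'M[R]_n) (i j k l : 'I_n) (t : R).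

Lemma col_stochastic_le1 A k l : col_stochastic A -> A k l <= 1.
Proof.
move=> [A_ge0 A_sum]; rewrite -(A_sum l) (bigD1 k) //= lerDl.
by apply: sumr_ge0 => q _; apply: A_ge0.
Qed.

Lemma col_mix_stochastic i j t :
  0 <= t <= 1 -> col_stochastic (col_mix i j t).
Proof.
move=> /andP[t_ge0 t_le1]; split=> [k l | l]; rewrite ?mxE.
  case: ifP => _; last exact: ler0n.
  by rewrite addr_ge0 ?mulr_ge0 ?subr_ge0.
under eq_bigr do rewrite mxE.
case: eqP => _; last exact: sum_delta.
by rewrite big_split /= -!mulr_sumr !sum_delta !mulr1 subrK.
Qed.

Lemma col_unmix_stochastic A i j t :
  col_stochastic A -> t < 1 -> (forall k, t * A k j <= A k i) ->
  col_stochastic (col_unmix A i j t).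
Proof.
move=> [A_ge0 A_sum] t_lt1 tA; have t1_gt0 : 0 < 1 - t by rewrite subr_gt0.
split=> [k l | l]; rewrite ?mxE.
  case: ifP => _; last exact: A_ge0.
  by rewrite divr_ge0 ?subr_ge0 // ltW.
under eq_bigr do rewrite mxE.
case: eqP => _; last exact: A_sum.
by rewrite -mulr_suml sumrB -mulr_sumr !A_sum mulr1 divff ?gt_eqF.
Qed.

Lemma col_unmix_col_gt0 A i j t :
  t < 1 -> (forall k, t * A k j < A k i) ->
  forall k, 0 < col_unmix A i j t k i.
Proof. by move=> t_lt1 tA k; rewrite mxE eqxx divr_gt0 ?subr_gt0. Qed.

Lemma divisible_of_factors (A B C : 'M[R]_n) :
  col_stochastic B -> col_stochastic C -> A = B *m C ->
  ~~ is_perm_mx B -> ~~ is_perm_mx C -> divisible A.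
Proof.
move=> SB SC defA /negbTE nB /negbTE nC indA.
by move: (indA B C SB SC defA); rewrite nB nC.
Qed.

End StochasticFactors.

Theorem corollary1 (R : realType) (n : nat) (A : 'M[R]_n) :
  (2 <= n)%N -> col_stochastic A ->
  (exists i : 'I_n, forall k : 'I_n, 0 < A k i) ->
  divisible A.
Proof.
move=> n_ge2 SA [i Ai]; have [j ji] := ord_exists_neq i n_ge2.
have [t /andP[t_gt0 t_lt1] tA] :=
  small_weight_exists Ai (fun k => col_stochastic_le1 k j SA).
apply: (divisible_of_factors (B := col_unmix A i j t) (C := col_mix i j t)).
- exact: col_unmix_stochastic (fun k => ltW (tA k)).
- by apply: col_mix_stochastic; rewrite !ltW.
- by rewrite col_unmixK // eq_sym ?(gt_eqF t_lt1).
- exact: not_perm_mx_col_gt0 n_ge2 (col_unmix_col_gt0 t_lt1 tA).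
- apply: (not_perm_mx_entry_in01 (k := j) (l := i)).
  by rewrite mxE eqxx (negbTE ji) eqxx mulr0 add0r mulr1 t_gt0.
Qed.
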